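(* A class of finite pointed $(\emptyset,[1])$-models is definable by a countable disjunction of $(\emptyset,[1])$-formulae of graded multimodal logic if and only if it is recognizable by the Weisfeiler–Leman algorithm.
   Context: $(\emptyset,[1])$-formulae of graded multimodal logic are generated by $\varphi ::= \top \mid \neg\varphi \mid (\varphi\land\varphi) \mid \langle 1\rangle_{\geq k}\varphi$ with $k\in\mathbb N$. A finite $(\emptyset,[1])$-model is $M=(W,R_1)$ with $W$ a nonempty finite set and $R_1\subseteq W\times W$; a pointed model is $(M,w)$ with $w\in W$; $(M,w)\models\langle1\rangle_{\geq k}\psi$ iff $|\{v:(w,v)\in R_1,\ (M,v)\models\psi\}|\geq k$, Boolean cases standard. A class $\mathcal K$ of finite pointed models is definable by a countable disjunction if there is a countable set $S$ of formulae with $(M,w)\in\mathcal K$ iff $(M,w)\models\varphi$ for some $\varphi\in S$, for every finite pointed model. Weisfeiler–Leman colors (canonical, injective color refinement): $c^M_0(w)=\ast$ (a fixed constant) for all $w$, and $c^M_{t+1}(w)=\big(c^M_t(w),\{\{c^M_t(v):(w,v)\in R_1\}\}\big)$, where $\{\{\cdot\}\}$ denotes the multiset. A class $\mathcal K$ of finite pointed $(\emptyset,[1])$-models is recognizable by the Weisfeiler–Leman algorithm if there is a set $F$ of colors such that, for every finite pointed model $(M,w)$, $(M,w)\in\mathcal K$ iff $c^M_t(w)\in F$ for some $t\in\mathbb N$. *)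

From HB Require Import structures.
From mathcomp Require Import all_boot.
Set Implicit Arguments. Unset Strict Implicit. Unset Printing Implicit Defensive.

Inductive form : Type :=
| FTop : form
| FNeg : form -> form
| FAnd : form -> form -> form
| FDia : nat -> form -> form.

(** Finite (emptyset,[1])-models: a finite type W (nonempty, as witnessed by
    the point w) with a binary relation R1 : rel W.  A pointed model is
    (W, R1, w). *)
Fixpoint sat (W : finType) (R1 : rel W) (phi : form) (w : W) : bool :=
  match phi with
  | FTop => true
  | FNeg p => ~~ sat R1 p w
  | FAnd p q => sat R1 p w && sat R1 q w
  | FDia k p => k <= #|[pred v | R1 w v && sat R1 p v]|
  end.

Definition pclass := forall W : finType, rel W -> W -> Prop.

(** Definable by a countable disjunction: a set S of formulae (any set of
    formulae is countable, since [form] is countable). *)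
Definition definable_by_countable_disjunction (K : pclass) : Prop :=
  exists S : form -> Prop,
    forall (W : finType) (R1 : rel W) (w : W),
      K W R1 w <-> exists phi, S phi /\ sat R1 phi w.

(** A colour is either the constant [Star] or a pair (old colour, multiset of
    colours); multisets are represented canonically as lists sorted by an
    injective encoding into nat, so equality of colours is equality of the
    pair (colour, multiset). *)
Inductive color : Type :=
| Star : color
| Refine : color -> seq color -> color.

Fixpoint color_enc (c : color) : GenTree.tree unit :=
  match c with
  | Star => GenTree.Leaf tt
  | Refine c ms => GenTree.Node 0 (color_enc c :: map color_enc ms)
  end.

Fixpoint color_dec (t : GenTree.tree unit) : color :=
  match t with
  | GenTree.Leaf _ => Star
  | GenTree.Node _ [::] => Star
  | GenTree.Node _ (t :: ts) => Refine (color_dec t) (map color_dec ts)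
  end.

Fixpoint color_encK (c : color) : color_dec (color_enc c) = c :=
  match c return color_dec (color_enc c) = c with
  | Star => erefl
  | Refine c ms =>
      f_equal2 Refine (color_encK c)
        ((fix F (l : seq color) : map color_dec (map color_enc l) = l :=
            match l return map color_dec (map color_enc l) = l with
            | [::] => erefl
            | x :: l' => f_equal2 cons (color_encK x) (F l')
            end) ms)
  end.

HB.instance Definition _ := Countable.copy color (can_type color_encK).

Definition mset_of (s : seq color) : seq color :=
  sort (fun a b => pickle a <= pickle b) s.

Fixpoint wl_color (W : finType) (R1 : rel W) (t : nat) (w : W) : color :=
  match t with
  | 0 => Star
  | t'.+1 => Refine (wl_color R1 t' w)
                    (mset_of [seq wl_color R1 t' v | v <- enum W & R1 w v])
  end.

Definition WL_recognizable (K : pclass) : Prop :=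
  exists F : color -> Prop,
    forall (W : finType) (R1 : rel W) (w : W),
      K W R1 w <-> exists t : nat, F (wl_color R1 t w).

From mathcomp Require Import all_boot.

(* The t-th Weisfeiler-Leman colour of w determines the truth at w of every
   formula of modal depth at most t: truth can be read off the colour itself,
   since [<1>_{>= k} phi] only counts the successors whose colour of the
   previous round satisfies [phi].  Conversely every colour [c] of round [t]
   is defined by a characteristic formula of depth [t], because graded
   modalities can fix the exact number of successors of each colour of the
   previous round.  A set [S] of formulae thus corresponds to the colours
   satisfying some [phi] in [S], and a set [F] of colours to the
   characteristic formulae of its members. *)

Set Implicit Arguments.
Unset Strict Implicit.
Unset Printing Implicit Defensive.

Section Successors.

Variables (W : finType) (R : rel W).

Definition succ (w : W) : seq W := [seq v <- enum W | R w v].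

Lemma card_succ (w : W) (P : pred W) :
  #|[pred v | R w v && P v]| = count P (succ w).
Proof.
rewrite cardE /enum_mem size_filter !count_filter.
by apply: eq_count => v /=; rewrite andbT andbC.
Qed.

End Successors.

Fixpoint height (c : color) : nat :=
  if c is Refine c' _ then (height c').+1 else 0.

Lemma height_wl_color (W : finType) (R : rel W) t w :
  height (wl_color R t w) = t.
Proof. by elim: t => //= t ->. Qed.

Lemma Refine_eqE a ms a' ms' :
  (Refine a ms == Refine a' ms') = (a == a') && (ms == ms').
Proof. by apply/eqP/andP => [[-> ->]|[/eqP -> /eqP ->]]. Qed.

Section Multisets.

Let leC (a b : color) := pickle a <= pickle b.

Let leC_total : total leC.
Proof. by move=> a b; apply: leq_total. Qed.

Let leC_trans : transitive leC.
Proof. by move=> a b c; apply: leq_trans. Qed.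

Let leC_anti : antisymmetric leC.
Proof. by move=> a b /anti_leq /(pcan_inj (@pickleK color)). Qed.

Lemma perm_mset_of s : perm_eq (mset_of s) s.
Proof. by rewrite perm_sort. Qed.

Lemma mset_ofK s : mset_of (mset_of s) = mset_of s.
Proof. exact/sorted_sort/sort_sorted/leC_total. Qed.

Lemma eq_mset_of s s' : (mset_of s == mset_of s') = perm_eq s s'.
Proof. exact/eqP/perm_sortP. Qed.

End Multisets.

Lemma perm_eq_count_memE (T : eqType) (s ms : seq T) :
  perm_eq s ms =
  all (mem ms) s && all (fun d => count_mem d s == count_mem d ms) ms.
Proof.
apply/idP/andP => [Hperm|[/allP s_ms /allP Hcount]].
  by split; apply/allP => x; rewrite ?(perm_mem Hperm) // (permP Hperm).
apply/allP => x _; apply/eqP.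
have [x_ms|x_ms] := boolP (x \in ms); first exact/eqP/Hcount.
rewrite (count_memPn x_ms); apply/count_memPn.
by apply: contra x_ms => /s_ms.
Qed.

Fixpoint depth (p : form) : nat :=
  match p with
  | FTop => 0
  | FNeg p => depth p
  | FAnd p q => maxn (depth p) (depth q)
  | FDia _ p => (depth p).+1
  end.

Fixpoint sat_color (p : form) (c : color) : bool :=
  match p with
  | FTop => true
  | FNeg p => ~~ sat_color p c
  | FAnd p q => sat_color p c && sat_color q c
  | FDia k p => if c is Refine _ ms then k <= count (sat_color p) ms else false
  end.

Lemma sat_wl_color (W : finType) (R : rel W) p t w :
  depth p <= t -> sat R p w = sat_color p (wl_color R t w).
Proof.
elim: p t w => [//|p IHp|p IHp q IHq|k p IHp] t w /=.
- by move=> /IHp ->.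
- by rewrite geq_max => /andP[/IHp -> /IHq ->].
case: t => // t /= Hp.
rewrite (permP (perm_mset_of _)) count_map card_succ.
by congr (k <= _); apply: eq_count => v; rewrite /= (IHp t).
Qed.

Definition FBot := FNeg FTop.
Definition FOr p q := FNeg (FAnd (FNeg p) (FNeg q)).
Definition FBox p := FNeg (FDia 1 (FNeg p)).
Definition FBigOr (ps : seq form) := foldr FOr FBot ps.
Definition FBigAnd (ps : seq form) := foldr FAnd FTop ps.
Definition FExactly m p := FAnd (FDia m p) (FNeg (FDia m.+1 p)).

Section DerivedConnectives.

Variables (W : finType) (R : rel W).

Lemma sat_FBigOr (f : color -> form) cs w :
  sat R (FBigOr (map f cs)) w = has (fun d => sat R (f d) w) cs.
Proof. by elim: cs => //= d cs <-; rewrite negb_and !negbK. Qed.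

Lemma sat_FBigAnd (f : color -> form) cs w :
  sat R (FBigAnd (map f cs)) w = all (fun d => sat R (f d) w) cs.
Proof. by elim: cs => //= d cs ->. Qed.

Lemma sat_FBox p w : sat R (FBox p) w = all (sat R p) (succ R w).
Proof. by rewrite /= card_succ -has_count has_predC negbK. Qed.

Lemma sat_FExactly m p w :
  sat R (FExactly m p) w = (#|[pred v | R w v && sat R p v]| == m).
Proof. by rewrite /= -leqNgt eqn_leq andbC. Qed.

End DerivedConnectives.

Definition FSuccMset (chi : color -> form) (ms : seq color) : form :=
  FAnd (FBox (FBigOr (map chi ms)))
       (FBigAnd [seq FExactly (count_mem d ms) (chi d) | d <- ms]).

Lemma sat_FSuccMset (W : finType) (R : rel W) (col : W -> color)
    (chi : color -> form) ms w :
  (forall d v, sat R (chi d) v = (col v == d)) ->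
  sat R (FSuccMset chi ms) w = perm_eq [seq col v | v <- succ R w] ms.
Proof.
move=> sat_chi.
rewrite -[LHS]/(sat R (FBox _) w && sat R (FBigAnd _) w).
rewrite sat_FBox sat_FBigAnd perm_eq_count_memE all_map; congr (_ && _).
  apply: eq_all => v /=; rewrite sat_FBigOr.
  apply/hasP/idP => [[d d_ms]|v_ms]; first by rewrite sat_chi => /eqP ->.
  by exists (col v); rewrite ?sat_chi.
under eq_all => d do rewrite sat_FExactly card_succ.
apply: eq_all => d /=; rewrite count_map; congr (_ == _).
by apply: eq_count => v; rewrite /= sat_chi.
Qed.

(* Ill-formed colours (multiset component not in canonical form, or
   [Star] after round 0) are never WL colours and get [FBot]. *)
Fixpoint char_form (t : nat) (c : color) : form :=
  match t, c with
  | 0, Star => FTop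
  | t'.+1, Refine c' ms =>
      if ms == mset_of ms then FAnd (char_form t' c') (FSuccMset (char_form t') ms)
      else FBot
  | _, _ => FBot
  end.

Lemma sat_char_form (W : finType) (R : rel W) t c w :
  sat R (char_form t c) w = (wl_color R t w == c).
Proof.
elim: t c w => [|t IHt] [|c' ms] w //; rewrite [char_form _ _]/=.
have [ms_canon|ms_not_canon] := eqVneq ms (mset_of ms); last first.
  by apply/esym/eqP => -[_ ms_eq]; rewrite -ms_eq mset_ofK eqxx in ms_not_canon.
rewrite -[LHS]/(sat R (char_form t c') w && sat R (FSuccMset (char_form t) ms) w).
rewrite IHt (sat_FSuccMset _ _ IHt).
by rewrite /= Refine_eqE ms_canon eq_mset_of -ms_canon.
Qed.

Theorem corollary3 (K : pclass) :
  definable_by_countable_disjunction K <-> WL_recognizable K.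
Proof.
split=> [[S defS]|[F recF]].
- exists (fun c => exists2 p, S p & depth p <= height c /\ sat_color p c).
  move=> W R w; split=> [/defS [p [Sp wp]]|[t [p Sp []]]].
    by exists (depth p), p => //; rewrite height_wl_color -sat_wl_color.
  rewrite height_wl_color => p_depth wp.
  by apply/defS; exists p; rewrite (sat_wl_color _ _ p_depth).
- exists (fun p => exists2 c, F c & p = char_form (height c) c).
  move=> W R w; split=> [/recF [t Ft]|[_ [[c Fc ->]]]].
    exists (char_form t (wl_color R t w)); rewrite sat_char_form eqxx.
    by split=> //; exists (wl_color R t w); rewrite ?height_wl_color.
  by rewrite sat_char_form => /eqP wc; apply/recF; exists (height c); rewrite wc.
Qed.
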